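(* Let $\Omega$ be a Cantor group with identity $e$ and let $T$ be a minimal translation of $\Omega$. Then for every limit-periodic potential $d\in\ell^\infty(\mathbb{Z})$ with $\mathrm{hull}(d)\cong\Omega$ (as topological groups), there exists $f\in C(\Omega,\mathbb{R})$ such that $f(T^n(e))=d_n$ for every $n\in\mathbb{Z}$.
   Context: A Cantor group is a totally disconnected compact abelian topological group without isolated points. A translation of a topological group $\Omega$ is a map $T(\omega)=\omega\cdot\omega_0$ for some fixed $\omega_0\in\Omega$; it is minimal if $\{T^n(\omega):n\in\mathbb{Z}\}$ is dense in $\Omega$ for every $\omega$. $\sigma$ is the left shift on $\ell^\infty(\mathbb{Z})$ (sup norm), $(\sigma d)_n=d_{n+1}$, and $\mathrm{hull}(d)$ is the closure of $\{\sigma^k d:k\in\mathbb{Z}\}$. A potential is periodic if its shift orbit is finite, and limit-periodic if it lies in the $\ell^\infty$-closure of the periodic potentials. For limit-periodic $d$, $\mathrm{hull}(d)$ is compact and carries a unique topological group structure with identity $d$ such that $k\mapsto\sigma^k(d)$ is a homomorphism $\mathbb{Z}\to\mathrm{hull}(d)$. *)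

From HB Require Import structures.
From mathcomp Require Import all_boot all_order all_algebra.
From mathcomp Require Import all_classical all_reals all_analysis.
Set Implicit Arguments. Unset Strict Implicit. Unset Printing Implicit Defensive.
Import Order.TTheory GRing.Theory Num.Theory.
Local Open Scope classical_set_scope.
Local Open Scope ring_scope.

Definition cantor_group (Om : topologicalZmodType) : Prop :=
  [/\ compact [set: Om], totally_disconnected [set: Om]
    & forall x : Om, ~ open [set x]].

(* n-th power of the translation T(w) = w + w0, for n : int. *)
Definition transl_pow (Om : zmodType) (w0 : Om) (n : int) (w : Om) : Om :=
  w + w0 *~ n.

Definition minimal_translation (Om : topologicalZmodType) (w0 : Om) : Prop :=
  forall w : Om, closure [set transl_pow w0 n w | n in [set: int]] = [set: Om].

Notation seqZ R := {uniform int -> R^o}.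

(* sigma^k d, where (sigma d)_n = d_{n+1} *)
Definition zshift (R : realType) (k : int) (d : seqZ R) : seqZ R :=
  fun n => d (n + k).

Definition linfty (R : realType) (d : int -> R) : Prop :=
  exists M : R, forall n, `|d n| <= M.

Definition periodic (R : realType) (d : seqZ R) : Prop :=
  finite_set [set zshift k d | k in [set: int]].

Definition limit_periodic (R : realType) (d : seqZ R) : Prop :=
  forall e : R, 0 < e -> exists p : seqZ R,
    periodic p /\ forall n, `|d n - p n| <= e.

Definition hull (R : realType) (d : seqZ R) : set (seqZ R) :=
  closure [set zshift k d | k in [set: int]].

From Pilot Require Import Defs.
From HB Require Import structures.
From mathcomp Require Import all_boot all_order all_algebra.
From mathcomp Require Import all_classical all_reals all_analysis.
From mathcomp Require Import lra ring.
Import Order.TTheory GRing.Theory Num.Theory.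
Local Open Scope classical_set_scope.
Local Open Scope ring_scope.
Set Implicit Arguments. Unset Strict Implicit. Unset Printing Implicit Defensive.

(* Transport the shift along the isomorphism: with a the image of sigma d, the orbit
   k |-> a *~ k is dense in Om and carries sigma^k d.  If p is a periodic approximation of
   d with period L, the closure U of the multiples of a by the periods of p is a closed
   subgroup containing a *~ L, hence of finite index and open, and on U the hull stays
   close to d.  Because w0 has dense orbit, w0 *~ m in U forces a *~ m in U, so
   d_(n+m) is close to d_n.  Thus k |-> d_k is uniformly continuous for the group
   uniformity along the dense orbit of w0, and extends continuously to Om. *)

Section Subgroup.
Variable G : zmodType.

Definition subgroup (U : set G) : Prop :=
  U 0 /\ forall x y, U x -> U y -> U (x - y).

Lemma subgroupN (U : set G) x : subgroup U -> U x -> U (- x).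
Proof. by move=> [U0 UB] Ux; rewrite -sub0r; exact: UB. Qed.

Lemma subgroupD (U : set G) x y : subgroup U -> U x -> U y -> U (x + y).
Proof. by move=> sU Ux Uy; rewrite -(opprK y); apply: sU.2 => //; exact: subgroupN. Qed.

Lemma subgroupMz (U : set G) x (m : int) : subgroup U -> U x -> U (x *~ m).
Proof.
move=> sU Ux.
have UMn (n : nat) : U (x *+ n).
  by elim: n => [|n IHn]; [rewrite mulr0n; exact: sU.1 | rewrite mulrS; exact: subgroupD].
by case: m => n; [exact: UMn | rewrite NegzE mulrNz; exact: subgroupN sU (UMn _)].
Qed.

Lemma subgroupI (U V : set G) : subgroup U -> subgroup V -> subgroup (U `&` V).
Proof.
move=> [U0 UB] [V0 VB]; split=> // x y [Ux Vx] [Uy Vy].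
by split; [exact: UB | exact: VB].
Qed.

Lemma subgroup_same_coset (U : set G) x u v :
  subgroup U -> U (u - x) -> U (v - x) -> U (u - v).
Proof. by move=> sU Uu Uv; have := sU.2 _ _ Uu Uv; rewrite opprB addrA subrK. Qed.

Lemma int_additiveE (g : int -> G) :
  {morph g : j k / j + k} -> forall k, g k = g 1 *~ k.
Proof.
move=> gD.
have g0 : g 0 = 0 by apply: (@addIr _ (g 0)); rewrite -gD !add0r.
have gn (n : nat) : g n = g 1 *~ n.
  by elim: n => [|n IHn] //; rewrite -addn1 PoszD gD IHn mulrzDr.
case=> n; first exact: gn.
by apply: (@addIr _ (g n.+1)); rewrite -gD NegzE addNr g0 (gn n.+1) mulrNz addNr.
Qed.

End Subgroup.

Lemma subgroup_imageMz (G : zmodType) (a : G) (P : set int) :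
  subgroup P -> subgroup [set a *~ m | m in P].
Proof.
move=> [P0 PB]; split; first by exists 0.
by move=> _ _ [m Pm <-] [n Pn <-]; exists (m - n); [exact: PB | rewrite mulrzBr].
Qed.

Lemma closure_subset_preimage (S T : topologicalType) (f : S -> T) (A : set S) (B : set T) :
  continuous f -> closed B -> A `<=` f @^-1` B -> closure A `<=` f @^-1` B.
Proof.
by move=> cf cB AB; apply: subset_trans (closureS AB) _; exact: closed_comp (fun x _ => cf x) cB.
Qed.

Section TopologicalSubgroup.
Variable Om : topologicalZmodType.

Lemma continuous_subr_cst (c : Om) : continuous (fun x : Om => x - c).
Proof.
move=> x; apply: (@continuous_comp _ _ _ (fun x => (x, c)) (fun p : Om * Om => p.1 - p.2)).
  by apply: cvg_pair; [exact: cvg_id | exact: cvg_cst].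
exact: sub_continuous.
Qed.

Lemma continuous_cst_subr (c : Om) : continuous (fun x : Om => c - x).
Proof.
move=> x; apply: (@continuous_comp _ _ _ (fun x => (c, x)) (fun p : Om * Om => p.1 - p.2)).
  by apply: cvg_pair; [exact: cvg_cst | exact: cvg_id].
exact: sub_continuous.
Qed.

Lemma closure_subgroup (U : set Om) : subgroup U -> subgroup (closure U).
Proof.
move=> sU; split; first exact/subset_closure/sU.1.
have clU_subr y : U y -> closure U `<=` [set x | closure U (x - y)].
  move=> Uy; apply: (closure_subset_preimage (@continuous_subr_cst y) (@closed_closure _ U)).
  by move=> x Ux; apply/subset_closure/sU.2.
move=> x y Ux; apply: (closure_subset_preimage (@continuous_cst_subr x) (@closed_closure _ U)).
by move=> z Uz; exact: clU_subr.
Qed.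

Lemma open_translate (U : set Om) x : open U -> open [set y | U (y - x)].
Proof. by move=> oU; apply: open_comp => // y _; exact: continuous_subr_cst. Qed.

Lemma closed_translate (U : set Om) x : closed U -> closed [set y | U (y - x)].
Proof. by apply: closed_comp => y _; exact: continuous_subr_cst. Qed.

Lemma closed_subgroup_finite_index_open (U : set Om) (c : nat -> Om) (N : nat) :
  closed U -> subgroup U -> (forall x, exists2 j, (j < N)%N & U (x - c j)) -> open U.
Proof.
move=> cU sU cover; rewrite -closedC.
have -> : ~` U = \bigcup_(j in [set j | (j < N)%N /\ ~ U (c j)]) [set y | U (y - c j)].
  apply/seteqP; split=> [x nUx | x [j [_ nUc] Uxc] Ux].
    have [j jN Uxc] := cover x; exists j => //; split=> // Uc; apply: nUx.
    by rewrite -(subrK (c j) x); exact: subgroupD.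
  by apply: nUc; have := sU.2 _ _ Ux Uxc; rewrite opprB addrC subrK.
apply: closed_bigcup => [|j _]; last exact: closed_translate.
by apply: sub_finite_set (finite_II N) => j [].
Qed.

(* The translates of U by a *~ j, j < |L|, cover the dense orbit of a, hence everything. *)
Lemma closed_subgroup_orbit_open (U : set Om) (a : Om) (L : int) :
  closure (range (fun k => a *~ k)) = setT -> closed U -> subgroup U ->
  L != 0 -> U (a *~ L) -> open U.
Proof.
move=> a_dense cU sU L0 UaL.
pose N := `|L|%N.
apply: (@closed_subgroup_finite_index_open U (fun j : nat => a *~ j) N) => // x.
pose B := \bigcup_(j in `I_N) [set y | U (y - a *~ (j : nat))].
suff [j /= jL Uj] : B x by exists j.
have cB : closed B.
  by apply: closed_bigcup => [|j _]; [exact: finite_II | exact: closed_translate].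
apply: cB; have : closure (range (fun k => a *~ k)) x by rewrite a_dense.
apply: closureS => _ [k _ <-]; exists `|(k %% L)%Z|%N => /=.
  by rewrite -ltz_nat gez0_abs ?modz_ge0 // abszE ltz_mod.
rewrite gez0_abs ?modz_ge0 // -mulrzBr {1}(divz_eq k L) addrK mulrC mulrzA.
exact: subgroupMz.
Qed.

End TopologicalSubgroup.

Section MinimalTranslation.
Variables (Om : topologicalZmodType) (w0 : Om).
Hypothesis w0_minimal : minimal_translation w0.

Lemma minimal_translation_meets (U : set Om) x :
  open U -> U 0 -> exists s : int, U (w0 *~ s - x).
Proof.
move=> oU U0.
have : closure [set transl_pow w0 n 0 | n in [set: int]] x by rewrite w0_minimal.
case/(_ [set y | U (y - x)]).
  by apply: open_nbhs_nbhs; split; [exact: open_translate | rewrite /= subrr].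
by move=> _ [[n _ <-]]; rewrite /transl_pow add0r; exists n.
Qed.

(* a and w0 *~ s lie in the same coset of U, so a *~ m and (w0 *~ m) *~ s do too. *)
Lemma open_subgroup_orbitMz (U : set Om) (a : Om) (m : int) :
  open U -> subgroup U -> U (w0 *~ m) -> U (a *~ m).
Proof.
move=> oU sU Um; have [s Us] := minimal_translation_meets a oU sU.1.
have -> : a *~ m = (w0 *~ m) *~ s - (w0 *~ s - a) *~ m.
  by rewrite mulrzBl -!mulrzA mulrC opprB addrC subrK.
by apply: sU.2; exact: subgroupMz.
Qed.

Variables (R : realType) (g : int -> R).

Definition orbit_modulus (e : R) (V : set Om) : Prop :=
  [/\ open V, subgroup V & forall j k, V (w0 *~ j - w0 *~ k) -> `|g j - g k| <= e].

(* A modulus (e, V) and any j with w0 *~ j in x + V pin the value at x to within e of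
   g j; take the infimum of the resulting upper estimates. *)
Definition orbit_extension (x : Om) : R^o :=
  inf [set r | exists e V j, [/\ orbit_modulus e V, V (w0 *~ j - x) & r = g j + e]].

Lemma orbit_extension_near x e V j :
  orbit_modulus e V -> V (w0 *~ j - x) -> `|orbit_extension x - g j| <= e.
Proof.
move=> Ve Vjx; have [oV sV gV] := Ve.
have lower : lbound [set r | exists e V j, [/\ orbit_modulus e V, V (w0 *~ j - x)
    & r = g j + e]] (g j - e).
  move=> _ [e' [V' [j' [[oV' sV' gV'] V'jx ->]]]].
  have [i [Vix V'ix]] : exists i, (V `&` V') (w0 *~ i - x).
    by apply: minimal_translation_meets; [exact: openI | exact: (subgroupI sV sV').1].
  have := gV j i (subgroup_same_coset sV Vjx Vix).
  have := gV' j' i (subgroup_same_coset sV' V'jx V'ix).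
  by rewrite !ler_norml => /andP[? ?] /andP[? ?]; lra.
have upper : orbit_extension x <= g j + e.
  by apply: ge_inf; [exists (g j - e) | exists e, V, j].
have : g j - e <= orbit_extension x by apply: lb_le_inf => //; exists (g j + e), e, V, j.
by rewrite ler_norml => ?; apply/andP; split; lra.
Qed.

Hypothesis g_uniform : forall e, 0 < e -> exists V, orbit_modulus e V.

Lemma orbit_extension_continuous : continuous orbit_extension.
Proof.
move=> x; apply/cvgrPdist_le => eps eps0.
have [V Veps] := g_uniform (divr_gt0 eps0 (ltr0n _ 2)); have [oV sV _] := Veps.
have : nbhs x [set y | V (y - x)].
  by apply: open_nbhs_nbhs; split; [exact: open_translate | rewrite /= subrr; exact: sV.1].
apply: filterS => y Vyx; have [j Vjy] := minimal_translation_meets y oV sV.1.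
have Vjx : V (w0 *~ j - x) by rewrite -[w0 *~ j](subrK y) -addrA; exact: subgroupD.
have := orbit_extension_near Veps Vjx; have := orbit_extension_near Veps Vjy.
move=> hy hx; apply: le_trans (ler_distD (g j) _ _) _; rewrite (distrC (g j)); lra.
Qed.

Lemma orbit_extensionMz k : orbit_extension (w0 *~ k) = g k.
Proof.
apply/eqP; rewrite -subr_eq0 -normr_le0; apply/ler_addgt0Pr => e e0.
have [V Ve] := g_uniform e0; rewrite add0r.
by apply: (orbit_extension_near Ve); rewrite subrr; case: Ve => _ [].
Qed.

End MinimalTranslation.

Section Potentials.
Variable R : realType.

Lemma continuous_seqZ_eval (n : int) : continuous (fun x : seqZ R => x n).
Proof.
move=> x; have FF : ProperFilter (nbhs x) := nbhs_pfilter x.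
apply/cvgrPdist_lt => e e0.
have : nbhs x [set h : seqZ R | forall m, [set: int] m ->
    (fun p : R^o * R^o => ball p.1 e p.2) (x m, h m)].
  apply/uniform_nbhs; exists (fun p : R^o * R^o => ball p.1 e p.2); split=> //.
  by rewrite -entourage_from_ballE; exists e.
by apply: filterS => h /(_ n I); rewrite /= -ball_normE.
Qed.

Lemma closed_seqZ_ball (c : seqZ R) (e : R) :
  closed [set x : seqZ R | forall n, `|x n - c n| <= e].
Proof.
have -> : [set x : seqZ R | forall n, `|x n - c n| <= e] =
    \bigcap_n ((fun x : seqZ R => `|x n - c n|) @^-1` [set r | r <= e]).
  by apply/seteqP; split=> [x cx n _ | x cx n]; [exact: cx | exact: cx n I].
apply: closed_bigI => n _.
have dist_cont : continuous (fun x : seqZ R => `|x n - c n| : R^o).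
  move=> x; have FF : ProperFilter (nbhs x) := nbhs_pfilter x.
  apply: (continuous_comp (f := fun x : seqZ R => x n - c n : R^o)); last exact: norm_continuous.
  by apply: cvgB; [exact: continuous_seqZ_eval | exact: cvg_cst].
exact: closed_comp (fun x _ => dist_cont x) (@closed_le R e).
Qed.

Lemma periodic_period (p : seqZ R) : Defs.periodic p ->
  exists2 L : int, L != 0 & forall n, p (n + L) = p n.
Proof.
move=> p_fin; apply: contrapT => no_period.
have shift_inj : {in (fun k : nat => zshift k%:Z p) @^-1` [set zshift k p | k in [set: int]] &,
    injective (fun k : nat => zshift k%:Z p)}.
  move=> j k _ _ /= jk; apply/eqP; rewrite -eqz_nat; apply: contrapT => /negP jk'.
  apply: no_period; exists (j%:Z - k%:Z); first by rewrite subr_eq0.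
  move=> n; have := congr1 (fun f : seqZ R => f (n - k%:Z)) jk.
  rewrite /zshift /= => pjk; rewrite -[in RHS](subrK k%:Z n) -pjk; congr p; ring.
have := finite_preimage shift_inj p_fin.
have -> : (fun k : nat => zshift k%:Z p) @^-1` [set zshift k p | k in [set: int]] = [set: nat].
  by apply/seteqP; split=> // k _; exists k.
exact: infinite_nat.
Qed.

Lemma hull_dense_orbit (Om : topologicalType) (d : seqZ R)
    (phi : seqZ R -> Om) (psi : Om -> seqZ R) :
  {within hull d, continuous phi} -> (forall w, hull d (psi w)) ->
  (forall w, phi (psi w) = w) ->
  closure (range (fun k => phi (zshift k d))) = setT.
Proof.
move=> phi_cont psi_hull psiK; apply/seteqP; split=> // w _ B Bw.
have := (@subspace_continuousP _ (hull d) _ phi).1 phi_cont (psi w) (psi_hull w).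
rewrite psiK => /(_ B Bw) /(psi_hull w) [_ [[k _ <-] Bk]].
exists (phi (zshift k d)); split; first by exists k.
by apply: Bk; apply: subset_closure; exists k.
Qed.

(* Periods of an e/2-approximating periodic p give, through psi, a closed subgroup of
   finite index of Om on which psi stays within e of d. *)
Lemma limit_periodic_orbit_modulus (Om : topologicalZmodType) (w0 a : Om)
    (d : seqZ R) (psi : Om -> seqZ R) :
  minimal_translation w0 -> limit_periodic d -> continuous psi ->
  (forall k, psi (a *~ k) = zshift k d) -> closure (range (fun k => a *~ k)) = setT ->
  forall e, 0 < e -> exists V, orbit_modulus w0 d e V.
Proof.
move=> w0_minimal d_lp psi_cont psi_aMz a_dense e e0.
have [p [p_per p_near]] := d_lp (e / 2) (divr_gt0 e0 (ltr0n _ 2)).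
have [L L0 pL] := periodic_period p_per.
pose P := [set m : int | forall n, p (n + m) = p n].
have sP : subgroup P.
  split=> [n | x y Px Py n]; first by rewrite addr0.
  have -> : n + (x - y) = (n - y) + x by ring.
  by rewrite Px -(Py (n - y)) subrK.
pose U := closure [set a *~ m | m in P].
have sU : subgroup U := closure_subgroup (subgroup_imageMz a sP).
have oU : open U.
  apply: (closed_subgroup_orbit_open a_dense (@closed_closure _ _) sU L0).
  by apply: subset_closure; exists L.
have psiU : U `<=` psi @^-1` [set x | forall n, `|x n - d n| <= e].
  apply: (closure_subset_preimage psi_cont (@closed_seqZ_ball d e)).
  move=> _ [m Pm <-] n; rewrite psi_aMz /zshift.
  have := p_near (n + m); have := p_near n; rewrite Pm => near_n near_nm.
  by apply: le_trans (ler_distD (p n) _ _) _; rewrite (distrC (p n)); lra.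
exists U; split=> // j k; rewrite -mulrzBr.
move=> /(open_subgroup_orbitMz w0_minimal a oU sU) /psiU /(_ k).
by rewrite psi_aMz /zshift subrKC.
Qed.

End Potentials.

Theorem theorem4p5 (R : realType) (Om : topologicalZmodType) (w0 : Om) :
  cantor_group Om -> minimal_translation w0 ->
  forall d : seqZ R, linfty d -> limit_periodic d ->
  forall (hop : seqZ R -> seqZ R -> seqZ R) (hinv : seqZ R -> seqZ R),
  (forall x y, hull d x -> hull d y -> hull d (hop x y)) ->
  (forall x, hull d x -> hull d (hinv x)) ->
  {within hull d `*` hull d, continuous (fun p => hop p.1 p.2)} ->
  {within hull d, continuous hinv} ->
  (forall x y z, hull d x -> hull d y -> hull d z ->
     hop x (hop y z) = hop (hop x y) z) ->
  (forall x, hull d x -> hop d x = x) ->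
  (forall x, hull d x -> hop (hinv x) x = d) ->
  (forall j k : int, hop (zshift j d) (zshift k d) = zshift (j + k) d) ->
  (exists (phi : seqZ R -> Om) (psi : Om -> seqZ R),
     [/\ {within hull d, continuous phi}, continuous psi,
         (forall w, hull d (psi w)),
         (forall w, phi (psi w) = w) /\ (forall x, hull d x -> psi (phi x) = x)
       & forall x y, hull d x -> hull d y -> phi (hop x y) = phi x + phi y]) ->
  exists f : Om -> R^o, continuous f /\
    forall n : int, f (transl_pow w0 n 0) = d n.
Proof.
move=> _ w0_minimal d _ d_lp hop _ _ _ _ _ _ _ _ hop_shift
  [phi [psi [phi_cont psi_cont psi_hull [psiK phiK] phi_hom]]].
have shift_hull k : hull d (zshift k d) by apply: subset_closure; exists k.
pose a := phi (zshift 1 d).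
have phi_shift k : phi (zshift k d) = a *~ k.
  apply: (int_additiveE (g := fun k => phi (zshift k d))) => j {}k /=.
  by rewrite -hop_shift phi_hom.
have psi_aMz k : psi (a *~ k) = zshift k d by rewrite -phi_shift phiK.
have a_dense : closure (range (fun k => a *~ k)) = setT.
  rewrite (_ : (fun k => a *~ k) = fun k => phi (zshift k d)).
    exact: hull_dense_orbit phi_cont psi_hull psiK.
  by apply/funext => k; rewrite phi_shift.
have d_modulus := limit_periodic_orbit_modulus w0_minimal d_lp psi_cont psi_aMz a_dense.
exists (orbit_extension w0 d); split; first exact: orbit_extension_continuous.
by move=> n; rewrite /transl_pow add0r orbit_extensionMz.
Qed.
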